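(* Let $\mathcal{A}\in\mathbb{R}^{n\times n\times n}$ and $\mathcal{E}\in\mathbb{R}^{n\times n\times n}$ be such that $\mathcal{A}$ and $\tilde{\mathcal{A}}=\mathcal{A}+\mathcal{E}$ are piezoelectric-type tensors. Let $E=\big(\mathcal{E}(1,:,:),\ \cdots,\ \mathcal{E}(n,:,:)\big)$ be the block matrix whose $i$-th block is the $n\times n$ matrix $\mathcal{E}(i,:,:)$. Then $$\lambda_{C\max}(\mathcal{A})-\|E\|_2\le \lambda_{C\max}(\tilde{\mathcal{A}})\le \lambda_{C\max}(\mathcal{A})+\|E\|_2.$$
   Context: A tensor $\mathcal{A}=(a_{ijk})\in\mathbb{R}^{n\times n\times n}$ is piezoelectric-type if $a_{ijk}=a_{ikj}$ for all $i,j,k$. For $i\in\{1,\dots,n\}$, $\mathcal{E}(i,:,:)$ denotes the $n\times n$ (symmetric) matrix whose $(j,k)$ entry is $\varepsilon_{ijk}$, where $\mathcal{E}=(\varepsilon_{ijk})$. $\|\cdot\|_2$ is the matrix spectral norm (largest singular value). For a piezoelectric-type tensor $\mathcal{A}$, $\lambda_{C\max}(\mathcal{A})=\max\{\sum_{i,j,k}a_{ijk}x_iy_jy_k:\ \mathbf{x},\mathbf{y}\in\mathbb{R}^n,\ \mathbf{x}^T\mathbf{x}=1,\ \mathbf{y}^T\mathbf{y}=1\}$, which is the largest $C$-eigenvalue of $\mathcal{A}$ (a $C$-eigenvalue being a real $\lambda$ with unit $\mathbf{x},\mathbf{y}$ satisfying $\sum_{j,k}a_{ijk}y_jy_k=\lambda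 x_i$ and $\sum_{j,k}a_{jki}x_jy_k=\lambda y_i$ for all $i$). *)

From HB Require Import structures.
From mathcomp Require Import all_boot all_order all_algebra.
From mathcomp Require Import boolp classical_sets reals.
Set Implicit Arguments. Unset Strict Implicit. Unset Printing Implicit Defensive.
Import Order.TTheory GRing.Theory Num.Theory.
Local Open Scope ring_scope.
Local Open Scope classical_set_scope.

Definition tensor3 (R : realType) (n : nat) := 'I_n -> 'I_n -> 'I_n -> R.

Definition tadd (R : realType) (n : nat) (A E : tensor3 R n) : tensor3 R n :=
  fun i j k => A i j k + E i j k.

Definition piezo_type (R : realType) (n : nat) (A : tensor3 R n) : Prop :=
  forall i j k, A i j k = A i k j.

Definition Axyy (R : realType) (n : nat) (A : tensor3 R n) (x y : 'I_n -> R) : R :=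
  \sum_(i < n) \sum_(j < n) \sum_(k < n) A i j k * x i * y j * y k.

Definition lambdaCmax (R : realType) (n : nat) (A : tensor3 R n) : R :=
  sup [set v | exists x y : 'I_n -> R,
        \sum_(i < n) x i ^+ 2 = 1 /\ \sum_(i < n) y i ^+ 2 = 1 /\ v = Axyy A x y].

(* The n x n^2 block matrix E = (E(1,:,:), ..., E(n,:,:)): row j of block i
   is eps(i,j,:), placed at columns mxvec_index i k. *)
Definition block_unfold (R : realType) (n : nat) (E : tensor3 R n) : 'M[R]_(n, n * n) :=
  \matrix_(j < n) mxvec (\matrix_(i < n, k < n) E i j k).

Definition spec_norm (R : realType) (p q : nat) (M : 'M[R]_(p, q)) : R :=
  sup [set v | exists u : 'cV[R]_q,
        \sum_(c < q) u c 0 ^+ 2 = 1 /\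
        v = Num.sqrt (\sum_(r < p) (M *m u) r 0 ^+ 2)].

From mathcomp Require Import all_boot all_order all_algebra.
From mathcomp Require Import boolp classical_sets reals.
From mathcomp Require Import ring lra.
Set Implicit Arguments. Unset Strict Implicit. Unset Printing Implicit Defensive.
Import Order.TTheory GRing.Theory Num.Theory.
Local Open Scope ring_scope.
Local Open Scope classical_set_scope.

(* Put u := x (x) y, a unit vector of length n^2.  Then E x y y = y^T (E u) for
   the unfolding E = (E(1,:,:), ..., E(n,:,:)), so Cauchy-Schwarz gives
   |E x y y| <= ||E u|| <= ||E||_2.  The objectives defining lambdaCmax for A and
   A + E thus differ by at most ||E||_2 at every feasible (x, y), hence so do
   their suprema. *)

Lemma sum_mxvec_index (V : nmodType) m n (F : 'I_(m * n) -> V) :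
  \sum_c F c = \sum_(i < m) \sum_(k < n) F (mxvec_index i k).
Proof.
rewrite pair_big (reindex _ (curry_mxvec_bij m n)) /=.
by apply: eq_bigr => -[i k].
Qed.

Section SupPerturbation.
Variables (R : realType) (T : Type).

Lemma sup_image_le_add (D : set T) (f h : T -> R) (s : R) : 0 <= s ->
  has_ubound (f @` D) -> (forall t, D t -> h t <= f t + s) ->
  sup (h @` D) <= sup (f @` D) + s.
Proof.
move=> s_ge0 f_ub h_le.
have [[t Dt] | D0] := pselect (D !=set0); last first.
  have D_eq0 : D = set0 by apply/seteqP; split => // t Dt; apply: D0; exists t.
  by rewrite D_eq0 !image_set0 sup0 add0r.
apply: ge_sup; first by exists (h t), t.
move=> _ [u Du <-]; apply: le_trans (h_le u Du) _.
by rewrite lerD2r; apply: ub_le_sup => //; exists u.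
Qed.

End SupPerturbation.

Section CauchySchwarz.
Variable R : realType.

Lemma sum_mul_le_sqrt_sum_sqr n (y w : 'I_n -> R) : \sum_j y j ^+ 2 = 1 ->
  \sum_j y j * w j <= Num.sqrt (\sum_j w j ^+ 2).
Proof.
move=> y_unit; set Q := \sum_j w j ^+ 2.
have Q_ge0 : 0 <= Q by apply: sumr_ge0 => j _; exact: sqr_ge0.
have [Q0 | Q_neq0] := eqVneq Q 0.
  have w0 j : w j = 0.
    apply/eqP; rewrite -sqrf_eq0; apply/eqP.
    exact: (psumr_eq0P (fun i _ => sqr_ge0 (w i)) Q0).
  by rewrite big1 ?sqrtr_ge0 // => j _; rewrite w0 mulr0.
set N := Num.sqrt Q.
have N_gt0 : 0 < N by rewrite sqrtr_gt0 lt_def Q_neq0 Q_ge0.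
have sqrN : N ^+ 2 = Q by rewrite sqr_sqrtr.
have : 0 <= \sum_j (N * y j - w j) ^+ 2 by apply: sumr_ge0 => j _; exact: sqr_ge0.
have -> : \sum_j (N * y j - w j) ^+ 2 =
    N ^+ 2 * \sum_j y j ^+ 2 - 2 * N * \sum_j y j * w j + Q.
  rewrite !mulr_sumr -sumrB -big_split /=.
  by apply: eq_bigr => j _; ring.
rewrite y_unit sqrN; nra.
Qed.

Lemma sqr_sum_mul_le_sum_sqr n (y w : 'I_n -> R) : \sum_j y j ^+ 2 = 1 ->
  (\sum_j y j * w j) ^+ 2 <= \sum_j w j ^+ 2.
Proof.
move=> y_unit.
have le_w := sum_mul_le_sqrt_sum_sqr w y_unit.
have := sum_mul_le_sqrt_sum_sqr (fun j => - w j) y_unit.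
under eq_bigr do rewrite mulrN; under [in X in _ <= X -> _]eq_bigr do rewrite sqrrN.
rewrite sumrN => le_Nw.
have Q_ge0 : 0 <= \sum_j w j ^+ 2 by apply: sumr_ge0 => j _; exact: sqr_ge0.
rewrite -[X in _ <= X](sqr_sqrtr Q_ge0); have := sqrtr_ge0 (\sum_j w j ^+ 2).
nra.
Qed.

End CauchySchwarz.

Section SpectralNorm.
Variable R : realType.

Lemma spec_norm_ge p q (M : 'M[R]_(p, q)) (u : 'cV[R]_q) :
  \sum_c u c 0 ^+ 2 = 1 -> Num.sqrt (\sum_r (M *m u) r 0 ^+ 2) <= spec_norm M.
Proof.
move=> u_unit; apply: ub_le_sup; last by exists u.
exists (Num.sqrt (\sum_r \sum_c M r c ^+ 2)) => y [v [v_unit ->]].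
rewrite ler_sqrt; last by do 2![apply: sumr_ge0 => ? _]; exact: sqr_ge0.
apply: ler_sum => r _; rewrite mxE.
under eq_bigr do rewrite mulrC.
exact: sqr_sum_mul_le_sum_sqr.
Qed.

Lemma spec_norm_ge0 p q (M : 'M[R]_(p, q)) : 0 <= spec_norm M.
Proof.
have [[u u_unit] | no_unit] := pselect (exists u : 'cV[R]_q, \sum_c u c 0 ^+ 2 = 1).
  exact: le_trans (sqrtr_ge0 _) (spec_norm_ge M u_unit).
rewrite /spec_norm; set S := (X in sup X).
have -> : S = set0 by apply/seteqP; split => // y [u [u_unit _]]; apply: no_unit; exists u.
by rewrite sup0.
Qed.

End SpectralNorm.

Section Tensors.
Variables (R : realType) (n : nat).
Implicit Types (A E : tensor3 R n) (x y : 'I_n -> R).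

Definition outer_vec x y : 'cV[R]_(n * n) := (mxvec (\matrix_(i, k) (x i * y k)))^T.

Lemma sum_sqr_outer_vec x y :
  \sum_c outer_vec x y c 0 ^+ 2 = (\sum_i x i ^+ 2) * (\sum_k y k ^+ 2).
Proof.
rewrite (sum_mxvec_index (fun c => outer_vec x y c 0 ^+ 2)) mulr_suml.
apply: eq_bigr => i _; rewrite mulr_sumr; apply: eq_bigr => k _.
by rewrite !mxE mxvecE mxE exprMn.
Qed.

Lemma block_unfold_mul_outer_vec E x y j :
  (block_unfold E *m outer_vec x y) j 0 = \sum_i \sum_k E i j k * (x i * y k).
Proof.
rewrite mxE (sum_mxvec_index (fun c => block_unfold E j c * outer_vec x y c 0)).
by apply: eq_bigr => i _; apply: eq_bigr => k _; rewrite !mxE !mxvecE !mxE.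
Qed.

Lemma Axyy_block_unfold E x y :
  Axyy E x y = \sum_j y j * (block_unfold E *m outer_vec x y) j 0.
Proof.
rewrite /Axyy exchange_big /=; apply: eq_bigr => j _.
rewrite block_unfold_mul_outer_vec mulr_sumr; apply: eq_bigr => i _.
by rewrite mulr_sumr; apply: eq_bigr => k _; ring.
Qed.

Lemma Axyy_le_spec_norm E x y :
  \sum_i x i ^+ 2 = 1 -> \sum_i y i ^+ 2 = 1 ->
  Axyy E x y <= spec_norm (block_unfold E).
Proof.
move=> x_unit y_unit.
have u_unit : \sum_c outer_vec x y c 0 ^+ 2 = 1.
  by rewrite sum_sqr_outer_vec x_unit y_unit mulr1.
rewrite Axyy_block_unfold.
exact: le_trans (sum_mul_le_sqrt_sum_sqr _ y_unit) (spec_norm_ge _ u_unit).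
Qed.

Lemma Axyy_tadd A E x y : Axyy (tadd A E) x y = Axyy A x y + Axyy E x y.
Proof.
rewrite /Axyy -big_split; apply: eq_bigr => i _.
rewrite -big_split; apply: eq_bigr => j _.
by rewrite -big_split; apply: eq_bigr => k _; rewrite /tadd /=; ring.
Qed.

Lemma Axyy_oppx E x y : Axyy E (fun i => - x i) y = - Axyy E x y.
Proof.
rewrite /Axyy -sumrN; apply: eq_bigr => i _.
rewrite -sumrN; apply: eq_bigr => j _.
by rewrite -sumrN; apply: eq_bigr => k _; ring.
Qed.

Lemma norm_Axyy_le_spec_norm E x y :
  \sum_i x i ^+ 2 = 1 -> \sum_i y i ^+ 2 = 1 ->
  `|Axyy E x y| <= spec_norm (block_unfold E).
Proof.
move=> x_unit y_unit; rewrite ler_norml Axyy_le_spec_norm // andbT lerNl.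
rewrite -Axyy_oppx Axyy_le_spec_norm //.
by under eq_bigr do rewrite sqrrN.
Qed.

Definition unit_pairs : set (('I_n -> R) * ('I_n -> R)) :=
  [set p | \sum_i p.1 i ^+ 2 = 1 /\ \sum_i p.2 i ^+ 2 = 1].

Lemma lambdaCmaxE A : lambdaCmax A = sup [set Axyy A p.1 p.2 | p in unit_pairs].
Proof.
congr sup; apply/seteqP; split.
  by move=> _ [x [y [x_unit [y_unit ->]]]]; exists (x, y).
by move=> _ [[x y] [x_unit y_unit] <-]; exists x, y.
Qed.

Lemma lambdaCmax_set_ub A : has_ubound [set Axyy A p.1 p.2 | p in unit_pairs].
Proof.
exists (spec_norm (block_unfold A)) => _ [[x y] [x_unit y_unit] <-].
exact: Axyy_le_spec_norm.
Qed.

End Tensors.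

Theorem corollary2p1 (R : realType) (n : nat) (A E : tensor3 R n) :
  piezo_type A -> piezo_type (tadd A E) ->
  lambdaCmax A - spec_norm (block_unfold E) <= lambdaCmax (tadd A E) /\
  lambdaCmax (tadd A E) <= lambdaCmax A + spec_norm (block_unfold E).
Proof.
move=> _ _; set s := spec_norm (block_unfold E).
have E_small p : unit_pairs p -> `|Axyy E p.1 p.2| <= s.
  by case: p => x y [x_unit y_unit]; exact: norm_Axyy_le_spec_norm.
have s_ge0 : 0 <= s := spec_norm_ge0 _.
rewrite lerBlDr !lambdaCmaxE.
by split; apply: sup_image_le_add s_ge0 (lambdaCmax_set_ub _) _ => p /E_small;
  rewrite Axyy_tadd ler_norml => /andP[]; lra.
Qed.
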